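(* Let $G$ be a group and $A$ an additive abelian group with a right $G$-action by group automorphisms. For $k\ge0$ let $\partial_k:\mathcal C^k(G,A)\to\mathcal C^{k+1}(G,A)$ be $(\partial_kc)(g_1,\dots,g_{k+1})=[c(g_1,\dots,g_k)]^{g_{k+1}}-c(g_1,\dots,g_k)$ (so $D^{n}=\partial_{n-1}\cdots\partial_0$). Then for every $n\ge1$: (1) $\delta^n\partial_{n-1}=\partial_n\delta^{n-1}+(-1)^n\partial_n\partial_{n-1}$ on $\mathcal C^{n-1}(G,A)$; (2) $\delta^nD^n=\partial_n\delta^{n-1}D^{n-1}+(-1)^nD^{n+1}$; (3) $\delta^nD^n=-D^{n+1}$ if $n$ is odd and $\delta^nD^n=0$ if $n$ is even (the latter also for $n=0$).
   Context: Right action: $a\mapsto a^g$, $a^{\mathbf e}=a$, $(a^g)^h=a^{gh}$, additive in $a$; $\mathbf e$ the identity of $G$. $\mathcal C^0(G,A)=A$; for $n\ge1$, $\mathcal C^n(G,A)$ is the group of functions $G^n\to A$ vanishing whenever some argument is $\mathbf e$. $D^0=\mathrm{id}_A$ and $D^n=\partial_{n-1}D^{n-1}$. The coboundary operator for the trivial left action, $\delta^n:\mathcal C^n(G,A)\to\mathcal C^{n+1}(G,A)$, is $[\delta^nc](g_1,\dots,g_{n+1})=c(g_2,\dots,g_{n+1})+\sum_{i=1}^{n}(-1)^ic(g_1,\dots,g_ig_{i+1},\dots,g_{n+1})+(-1)^{n+1}c(g_1,\dots,g_n)$; in particular $\delta^0=0$. *)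

From HB Require Import structures.
From mathcomp Require Import all_boot all_order all_algebra.
Set Implicit Arguments. Unset Strict Implicit. Unset Printing Implicit Defensive.
Import Order.TTheory GRing.Theory Num.Theory.
Local Open Scope ring_scope.

Section Cochains.
Variables (G : Type) (mul : G -> G -> G) (e : G) (A : zmodType) (act : A -> G -> A).

Definition cochain (n : nat) := {ffun 'I_n -> G} -> A.

Definition normalized (n : nat) (c : cochain n) : Prop :=
  forall g : {ffun 'I_n -> G}, (exists i, g i = e) -> c g = 0.

Definition tailf (n : nat) (g : {ffun 'I_n.+1 -> G}) : {ffun 'I_n -> G} :=
  [ffun j : 'I_n => g (lift ord0 j)].

Definition initf (n : nat) (g : {ffun 'I_n.+1 -> G}) : {ffun 'I_n -> G} :=
  [ffun j : 'I_n => g (widen_ord (leqnSn n) j)].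

(* 0-indexed i : (g_0,...,g_n) |-> (g_0,...,g_i g_{i+1},...,g_n) *)
Definition mergef (n : nat) (i : 'I_n) (g : {ffun 'I_n.+1 -> G}) : {ffun 'I_n -> G} :=
  [ffun j : 'I_n => if (j < i)%N then g (widen_ord (leqnSn n) j)
                    else if j == i then mul (g (widen_ord (leqnSn n) j)) (g (lift ord0 j))
                    else g (lift ord0 j)].

(* coboundary for the trivial left action:
   [delta^n c](g_1..g_{n+1}) = c(g_2..g_{n+1})
      + sum_{i=1}^n (-1)^i c(g_1,..,g_i g_{i+1},..,g_{n+1}) + (-1)^{n+1} c(g_1..g_n) *)
Definition delta (n : nat) (c : cochain n) : cochain n.+1 :=
  fun g => c (tailf g)
           + \sum_(i < n) (c (mergef i g)) *~ ((-1) ^+ i.+1)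
           + (c (initf g)) *~ ((-1) ^+ n.+1).

Definition pdel (k : nat) (c : cochain k) : cochain k.+1 :=
  fun g => act (c (initf g)) (g ord_max) - c (initf g).

Unset Implicit Arguments.
Fixpoint Dop (n : nat) : A -> cochain n :=
  match n return A -> cochain n with
  | 0 => fun a _ => a
  | m.+1 => fun a => pdel (Dop m a)
  end.

Set Implicit Arguments.
End Cochains.
Arguments Dop {G A} act n a _.

From mathcomp Require Import all_boot all_order all_algebra.
Import GRing.Theory.
Local Open Scope ring_scope.

(* Every face of the cochain pdel c, except the last two, is the matching face
   of c followed by a |-> a^h - a, where h is the last argument; this map is
   additive, so those faces assemble into pdel (delta c) minus its last term.
   The two remaining faces (merging the last two arguments, dropping the last
   one) combine with that missing term, via (a^g)^h = a^(gh), into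
   (-1)^n pdel (pdel c).  Taking c = D^(n-1) a gives (2), and (3) follows from
   (2) by induction on n, starting from delta^0 = 0. *)

Section Faces.
Variables (G : Type) (mul : G -> G -> G).

Lemma initf_tailf n (g : {ffun 'I_n.+2 -> G}) : initf (tailf g) = tailf (initf g).
Proof. by apply/ffunP => j; rewrite !ffunE; congr (g _); apply: val_inj. Qed.

Lemma tailf_ord_max n (g : {ffun 'I_n.+2 -> G}) : tailf g ord_max = g ord_max.
Proof. by rewrite ffunE; congr (g _); apply: val_inj. Qed.

Lemma initf_mergef_widen n (i : 'I_n) (g : {ffun 'I_n.+2 -> G}) :
  initf (mergef mul (widen_ord (leqnSn n) i) g) = mergef mul i (initf g).
Proof.
apply/ffunP => j; rewrite !ffunE /=.
have -> : (widen_ord (leqnSn n) j == widen_ord (leqnSn n) i) = (j == i).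
  by rewrite -val_eqE.
case: ifP => _; first by congr (g _); apply: val_inj.
case: ifP => _; last by congr (g _); apply: val_inj.
by congr (mul (g _) (g _)); apply: val_inj.
Qed.

Lemma mergef_widen_ord_max n (i : 'I_n) (g : {ffun 'I_n.+2 -> G}) :
  mergef mul (widen_ord (leqnSn n) i) g ord_max = g ord_max.
Proof.
rewrite ffunE /= ltnNge (ltnW (ltn_ord i)) /=.
have -> : (ord_max == widen_ord (leqnSn n) i :> 'I_n.+1) = false.
  by apply/negbTE; rewrite -val_eqE /= neq_ltn ltn_ord orbT.
by congr (g _); apply: val_inj.
Qed.

Lemma initf_mergef_ord_max n (g : {ffun 'I_n.+2 -> G}) :
  initf (mergef mul ord_max g) = initf (initf g).
Proof.
by apply/ffunP => j; rewrite !ffunE /= ltn_ord; congr (g _); apply: val_inj.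
Qed.

Lemma mergef_ord_max_ord_max n (g : {ffun 'I_n.+2 -> G}) :
  mergef mul ord_max g ord_max = mul (initf g ord_max) (g ord_max).
Proof.
by rewrite !ffunE /= ltnn eqxx; congr (mul (g _) (g _)); apply: val_inj.
Qed.

End Faces.

Section Action.
Variables (G : Type) (A : zmodType) (act : A -> G -> A).
Hypothesis actD : forall a b g, act (a + b) g = act a g + act b g.

Lemma act0 g : act 0 g = 0.
Proof. by apply: (addrI (act 0 g)); rewrite -actD !addr0. Qed.

Lemma actN a g : act (- a) g = - act a g.
Proof. by apply/eqP; rewrite -subr_eq0 opprK -actD addNr act0. Qed.

Lemma actB a b g : act (a - b) g = act a g - act b g.
Proof. by rewrite actD actN. Qed.

Lemma actMn a g k : act (a *+ k) g = act a g *+ k.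
Proof. by elim: k => [|k IHk]; rewrite ?mulr0n ?act0 // !mulrS actD IHk. Qed.

Lemma actMz a g (z : int) : act (a *~ z) g = act a g *~ z.
Proof. by case: z => k; rewrite /intmul ?actN actMn. Qed.

Lemma act_sum I (r : seq I) (P : pred I) (F : I -> A) g :
  act (\sum_(i <- r | P i) F i) g = \sum_(i <- r | P i) act (F i) g.
Proof. exact: (big_morph (act^~ g) (fun a b => actD a b g) (act0 g)). Qed.

Variable mul : G -> G -> G.
Hypothesis actM : forall a g h, act (act a g) h = act a (mul g h).

Lemma delta_pdel m (c : cochain G A m) (g : {ffun 'I_m.+2 -> G}) :
  delta mul (pdel act c) g
  = pdel act (delta mul c) g + pdel act (pdel act c) g *~ ((-1) ^+ m.+1).
Proof.
set g' := initf g; set h := g ord_max; set s : int := (-1) ^+ m.+1.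
set fh := fun a => act a h - a.
have pdel_tail : pdel act c (tailf g) = fh (c (tailf g')).
  by rewrite /pdel initf_tailf tailf_ord_max.
have pdel_merge i : pdel act c (mergef mul (widen_ord (leqnSn m) i) g)
                    = fh (c (mergef mul i g')).
  by rewrite /pdel initf_mergef_widen mergef_widen_ord_max.
have pdel_merge_last : pdel act c (mergef mul ord_max g)
                       = act (c (initf g')) (mul (g' ord_max) h) - c (initf g').
  by rewrite /pdel initf_mergef_ord_max mergef_ord_max_ord_max.
have pdel_delta : pdel act (delta mul c) g
    = fh (c (tailf g')) + \sum_(i < m) fh (c (mergef mul i g')) *~ (-1) ^+ i.+1
      + fh (c (initf g')) *~ s.
  rewrite /pdel /delta -/g' -/h !actD act_sum actMz !opprD.
  rewrite addrACA [X in X + _]addrACA -mulrzBl -sumrB.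
  by under eq_bigr do rewrite actMz -mulrzBl.
have sign_next : (-1) ^+ m.+2 = - s by rewrite exprS mulN1r.
have last_terms :
    (act (c (initf g')) (mul (g' ord_max) h) - c (initf g')) *~ s
      + pdel act c g' *~ - s
    = fh (c (initf g')) *~ s + pdel act (pdel act c) g *~ s.
  have -> : pdel act (pdel act c) g
      = act (c (initf g')) (mul (g' ord_max) h) - act (c (initf g')) h - pdel act c g'.
    by rewrite [in LHS]/pdel actB actM.
  set P := act _ (mul _ _); set Q := act _ h; set I := c _.
  by rewrite mulrNz -!mulrzBl -mulrzDl addrA [Q - I + _]addrC subrKA.
rewrite /delta big_ord_recr /= pdel_tail pdel_merge_last -/s sign_next.
under eq_bigr do rewrite pdel_merge.
by rewrite pdel_delta -!addrA last_terms.
Qed.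

Lemma delta0 (c : cochain G A 0) (g : {ffun 'I_1 -> G}) : delta mul c g = 0.
Proof.
rewrite /delta big_ord0 addr0 expr1 mulrN1z.
have -> : initf g = tailf g by apply/ffunP => -[].
exact: subrr.
Qed.

Lemma delta_Dop n a (g : {ffun 'I_n.+1 -> G}) :
  delta mul (Dop act n a) g = if odd n then - Dop act n.+1 a g else 0.
Proof.
elim: n => [|n IHn] in g *; first exact: delta0.
have pdel_delta_Dop :
    pdel act (delta mul (Dop act n a)) g = if odd n then - Dop act n.+2 a g else 0.
  rewrite /pdel IHn; case: (odd n); last by rewrite act0 subr0.
  by rewrite actN -opprD.
rewrite delta_pdel pdel_delta_Dop -signr_odd /=.
by case: (odd n) => /=; rewrite ?expr0 ?mulr1z ?addNr // expr1 mulrN1z add0r.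
Qed.

End Action.

Theorem lemma1p21
  (G : Type) (mul : G -> G -> G) (e : G) (inv : G -> G)
  (mulA : forall x y z, mul x (mul y z) = mul (mul x y) z)
  (mul1g : forall x, mul e x = x) (mulg1 : forall x, mul x e = x)
  (mulVg : forall x, mul (inv x) x = e) (mulgV : forall x, mul x (inv x) = e)
  (A : zmodType) (act : A -> G -> A)
  (act1 : forall a, act a e = a)
  (actM : forall a g h, act (act a g) h = act a (mul g h))
  (actD : forall a b g, act (a + b) g = act a g + act b g) :
  (* (1), n = m+1 >= 1, on C^{n-1} *)
  (forall (m : nat) (c : cochain G A m), normalized e c ->
     forall g : {ffun 'I_m.+2 -> G},
       delta mul (pdel act c) g
       = pdel act (delta mul c) g
         + (pdel act (pdel act c) g) *~ ((-1) ^+ m.+1))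
  /\
  (* (2), n = m+1 >= 1 *)
  (forall (m : nat) (a : A) (g : {ffun 'I_m.+2 -> G}),
       delta mul (Dop act m.+1 a) g
       = pdel act (delta mul (Dop act m a)) g
         + (Dop act m.+2 a g) *~ ((-1) ^+ m.+1))
  /\
  (* (3), all n >= 0 *)
  (forall (n : nat) (a : A) (g : {ffun 'I_n.+1 -> G}),
       delta mul (Dop act n a) g = if odd n then - Dop act n.+1 a g else 0).
Proof.
split; first by move=> m c _ g; apply: delta_pdel.
split; first by move=> m a g; apply: delta_pdel.
exact: delta_Dop.
Qed.
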